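(* Let $c\in\mathbb{N}$ and let $\pi$ be a $c$-witness. Then there exists a $c$-witness $\pi'$ such that either $\mathrm{cost}_1(\pi')=+\infty$ or $\mathrm{cost}_1(\pi')\le 2|V|W$.
   Context: Reachability game with one-player environment: a finite set $V$ of vertices, edges $E\subseteq V\times V$ (each vertex has a successor), initial vertex $v_0$, two players $0$ and $1$ owning a partition $V_0\uplus V_1$ of $V$, weight functions $w_0,w_1:E\to\mathbb{N}$, $W=\max\{w_i(e)\mid e\in E, i\in\{0,1\}\}$, and target sets $T_0,T_1\subseteq V$. For a play (infinite path) $\pi$, $\mathrm{cost}_i(\pi)$ is the sum of $w_i$ over the edges of the shortest prefix of $\pi$ ending in $T_i$, and $+\infty$ if none. A strategy of player $i$ maps each finite path ending in $V_i$ to a successor of its last vertex. A deviation of a play $\pi$ is a finite path $hv$ ($v\in V$) such that $h$ is a nonempty prefix of $\pi$ but $hv$ is not. A $c$-witness is a play $\pi$ from $v_0$ such that $\mathrm{cost}_0(\pi)\le c$ and, with $d=\mathrm{cost}_1(\pi)$, for every deviation $hv$ of $\pi$, player $0$ has a strategy from $v$ in the two-player zero-sum game (player $0$ against player $1$) such that every play $\pi'$ starting at $v$ consistent with it satisfies $\mathrm{cost}_0(h\pi')\le c$ or $\mathrm{cost}_1(h\pi')>d$. *)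

From mathcomp Require Import all_boot.
From Stdlib Require Import ClassicalEpsilon.

Set Implicit Arguments.
Unset Strict Implicit.
Unset Printing Implicit Defensive.

Section Game.
Variable V : finType.

Definition is_play (E : rel V) (p : nat -> V) : Prop :=
  forall n, E (p n) (p n.+1).

Definition hit_time (T : {set V}) (p : nat -> V) : option nat :=
  match excluded_middle_informative (exists k, p k \in T) with
  | left H => Some (@ex_minn (fun k => p k \in T) H)
  | right _ => None
  end.

(* cost: weight of the shortest prefix ending in T; None = +infinity *)
Definition cost (w : V -> V -> nat) (T : {set V}) (p : nat -> V) : option nat :=
  omap (fun k => \sum_(j < k) w (p j) (p j.+1)) (hit_time T p).

Definition ole (x : option nat) (c : nat) : Prop :=
  if x is Some n then n <= c else False.

Definition ogt (x y : option nat) : Prop :=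
  match y with
  | None => False
  | Some m => match x with None => True | Some n => m < n end
  end.

Definition concat_play (k : nat) (p q : nat -> V) : nat -> V :=
  fun n => if n < k then p n else q (n - k).

(* strategy of player 0: sigma x s is the choice after the finite path x :: s *)
Definition strategy_valid (E : rel V) (V0 : {set V}) (sigma : V -> seq V -> V) : Prop :=
  forall x s, path E x s -> last x s \in V0 -> E (last x s) (sigma x s).

Definition consistent (E : rel V) (V0 : {set V}) (sigma : V -> seq V -> V)
  (v : V) (q : nat -> V) : Prop :=
  [/\ q 0 = v, is_play E q &
      forall n, q n \in V0 -> q n.+1 = sigma (q 0) [seq q i | i <- iota 1 n]].

(* c-witness. A deviation h v of p is given by k >= 1 (h = p 0 .. p (k-1)),
   with E (p (k-1)) v (h v is a finite path) and v <> p k (h v not a prefix). *)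
Definition witness (E : rel V) (V0 : {set V}) (w0 w1 : V -> V -> nat)
  (T0 T1 : {set V}) (v0 : V) (c : nat) (p : nat -> V) : Prop :=
  [/\ p 0 = v0, is_play E p, ole (cost w0 T0 p) c &
   forall k v, 0 < k -> E (p k.-1) v -> v != p k ->
     exists sigma, strategy_valid E V0 sigma /\
       forall q, consistent E V0 sigma v q ->
         ole (cost w0 T0 (concat_play k p q)) c \/
         ogt (cost w1 T1 (concat_play k p q)) (cost w1 T1 p)].

Definition maxW (E : rel V) (w0 w1 : V -> V -> nat) : nat :=
  \max_(e : V * V | E e.1 e.2) maxn (w0 e.1 e.2) (w1 e.1 e.2).

End Game.

From mathcomp Require Import all_boot zify.
From Stdlib Require Import FunctionalExtensionality ClassicalEpsilon.

Set Implicit Arguments.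
Unset Strict Implicit.
Unset Printing Implicit Defensive.

(* If the first visit of T1 happens after more than 2|V| steps, then either the
   stretch before both targets are reached or the stretch between the visit of T0
   and that of T1 is longer than |V|, so the play repeats a vertex there.  Cutting
   out the loop between the repetitions keeps the visit of T0 and the first visit
   of T1 (both lie outside the loop), so player 0 still pays at most c.  A deviation
   of the shortened play is either a deviation of the original one before the loop,
   or one after it with the loop cut out; in the latter case cutting lowers the
   costs of both compared plays by the same loop weight, so player 0 still wins.
   Iterating, the first visit of T1 comes within 2|V| steps, each of weight at
   most W. *)

Section Paths.
Variable V : Type.
Implicit Types (P Q : nat -> V) (w : V -> V -> nat).

Definition prefix_weight w P k := \sum_(j < k) w (P j) (P j.+1).

Definition cut_loop i s P n : V := if n <= i then P n else P (n + s).

Lemma prefix_weight_split w P m n : m <= n ->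
  prefix_weight w P n = prefix_weight w P m + \sum_(m <= j < n) w (P j) (P j.+1).
Proof.
move=> le_mn; rewrite /prefix_weight.
by rewrite -!(big_mkord xpredT (fun j => w (P j) (P j.+1))) -big_cat_nat.
Qed.

Lemma prefix_weight_mono w P : {homo prefix_weight w P : m n / m <= n}.
Proof. by move=> m n le_mn; rewrite (prefix_weight_split w P le_mn) leq_addr. Qed.

Lemma eq_prefix_weight w P Q k : (forall m, m <= k -> P m = Q m) ->
  prefix_weight w P k = prefix_weight w Q k.
Proof. by move=> PQ; apply: eq_bigr => j _; rewrite !PQ // ltnW. Qed.

Lemma cut_loop_le i s P n : n <= i -> cut_loop i s P n = P n.
Proof. by rewrite /cut_loop => ->. Qed.

Lemma cut_loop_ge i s P n : P i = P (i + s) -> i <= n -> cut_loop i s P n = P (n + s).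
Proof.
rewrite /cut_loop => loop le_in; case: ifP => // le_ni.
by have -> : n = i by apply/eqP; rewrite eqn_leq le_ni.
Qed.

Lemma prefix_weight_cut_loop w i s P n : P i = P (i + s) -> i <= n ->
  prefix_weight w (cut_loop i s P) n + prefix_weight w P (i + s) =
  prefix_weight w P (n + s) + prefix_weight w P i.
Proof.
move=> loop le_in.
have shifted : \sum_(i <= j < n) w (cut_loop i s P j) (cut_loop i s P j.+1) =
               \sum_(i + s <= j < n + s) w (P j) (P j.+1).
  rewrite big_addn addnK; apply: eq_big_nat => j /andP[le_ij _].
  by rewrite !cut_loop_ge // ?addSn // (leq_trans le_ij).
rewrite (prefix_weight_split _ _ le_in) (prefix_weight_split w P (leq_add le_in (leqnn s))).
rewrite shifted (@eq_prefix_weight w _ P i) => [|m le_mi]; last exact: cut_loop_le.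
lia.
Qed.

End Paths.

Section FirstVisits.
Variable V : finType.
Implicit Types (P Q q : nat -> V) (T : {set V}) (w : V -> V -> nat).

Lemma costE w T P : cost w T P = omap (prefix_weight w P) (hit_time T P).
Proof. by []. Qed.

Variant hit_time_spec T P : option nat -> Prop :=
  | HitAt h of P h \in T & (forall m, m < h -> P m \notin T) :
      hit_time_spec T P (Some h)
  | HitNever of (forall k, P k \notin T) : hit_time_spec T P None.

Lemma hit_timeP T P : hit_time_spec T P (hit_time T P).
Proof.
rewrite /hit_time; case: excluded_middle_informative => [ex | nex].
  case: ex_minnP => h Ph h_min; apply: HitAt => // m lt_mh.
  by apply/negP => /h_min; rewrite leqNgt lt_mh.
by apply: HitNever => k; apply/negP => Pk; apply: nex; exists k.
Qed.

Lemma hit_time_Some T P h :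
  P h \in T -> (forall m, m < h -> P m \notin T) -> hit_time T P = Some h.
Proof.
move=> Ph early; case: hit_timeP => [h' Ph' early' | never]; last first.
  by rewrite (negbTE (never h)) in Ph.
case: (ltngtP h' h) => [/early | /early' | -> //].
  by rewrite Ph'.
by rewrite Ph.
Qed.

Lemma hit_time_prefix T P Q n h : (forall m, m <= n -> P m = Q m) ->
  hit_time T P = Some h -> h <= n -> hit_time T Q = Some h.
Proof.
move=> PQ; case: hit_timeP => // h' Ph early [<-] le_hn.
apply: hit_time_Some => [|m lt_mh]; first by rewrite -PQ.
by rewrite -PQ ?early // ltnW // (leq_trans lt_mh).
Qed.

Definition hit_outside_loop T P i s :=
  forall h, hit_time T P = Some h -> h <= i \/ i + s < h.

Lemma hit_outside_loop_prefix T P Q i s : (forall m, m <= i + s -> P m = Q m) ->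
  hit_outside_loop T P i s -> hit_outside_loop T Q i s.
Proof.
move=> PQ out h hitQ; case: (ltnP (i + s) h) => [_ | le_h]; first by right.
have hitP : hit_time T P = Some h by apply: hit_time_prefix hitQ le_h => m /PQ.
by case: (out h hitP) => [|]; [left | rewrite ltnNge le_h].
Qed.

Section CutLoop.
Variables (i s : nat).

Lemma hit_time_cut_loop T P : P i = P (i + s) -> hit_outside_loop T P i s ->
  hit_time T (cut_loop i s P) =
  omap (fun h => if h <= i then h else h - s) (hit_time T P).
Proof.
move=> loop; rewrite /hit_outside_loop.
case: (hit_timeP T P) => [h Ph early | never] out /=; last first.
  case: (hit_timeP T (cut_loop i s P)) => // h.
  by rewrite /cut_loop; case: ifP => _; rewrite (negbTE (never _)).
case: (out h erefl) => {out} [le_hi | lt_h].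
  rewrite le_hi; apply: hit_time_Some => [|m lt_mh]; first by rewrite cut_loop_le.
  by rewrite cut_loop_le ?early // ltnW // (leq_trans lt_mh).
have [le_ih le_sh] : i <= h - s /\ s <= h by split; lia.
rewrite leqNgt (leq_ltn_trans (leq_addr s i) lt_h) /=.
apply: hit_time_Some => [|m lt_m]; first by rewrite cut_loop_ge // subnK.
rewrite /cut_loop; case: ifP => _; apply: early; lia.
Qed.

Lemma cost_cut_loop w T P : P i = P (i + s) -> hit_outside_loop T P i s ->
  cost w T (cut_loop i s P) =
  omap (fun h => if h <= i then prefix_weight w P h
                 else prefix_weight w P h + prefix_weight w P i - prefix_weight w P (i + s))
       (hit_time T P).
Proof.
move=> loop out; rewrite costE hit_time_cut_loop //.
case hitP: (hit_time T P) => [h|] //=; congr Some; case: ifP => [le_hi | lt_ih].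
  by apply: eq_prefix_weight => m le_mh; rewrite cut_loop_le // (leq_trans le_mh).
have lt_h : i + s < h by case: (out h hitP) => //; rewrite lt_ih.
have le_sh : s <= h by rewrite (leq_trans (leq_addl i s)) // ltnW.
have le_ih : i <= h - s by rewrite leq_subRL // addnC ltnW.
have -> : prefix_weight w P h = prefix_weight w P (h - s + s) by rewrite subnK.
by rewrite -(prefix_weight_cut_loop w loop le_ih) addnK.
Qed.

Lemma cost_cut_loop_le w T P x : P i = P (i + s) -> hit_outside_loop T P i s ->
  cost w T P = Some x -> exists2 y, cost w T (cut_loop i s P) = Some y & y <= x.
Proof.
move=> loop out; rewrite cost_cut_loop // costE.
case: (hit_time T P) => //= h [<-]; eexists; first reflexivity.
case: (h <= i) => //; have := prefix_weight_mono w P (leq_addr s i); lia.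
Qed.

Lemma ole_cost_cut_loop w T P c : P i = P (i + s) -> hit_outside_loop T P i s ->
  ole (cost w T P) c -> ole (cost w T (cut_loop i s P)) c.
Proof.
move=> loop out; case costP: (cost w T P) => [x|] //= le_xc.
by have [y -> le_yx] := cost_cut_loop_le loop out costP; apply: leq_trans le_xc.
Qed.

Lemma ogt_cost_cut_loop w T P X : P i = P (i + s) -> hit_outside_loop T P i s ->
  ogt X (cost w T P) -> ogt X (cost w T (cut_loop i s P)).
Proof.
move=> loop out; case costP: (cost w T P) => [x|] //.
have [y -> le_yx] := cost_cut_loop_le loop out costP.
by case: X => //= z lt_xz; apply: leq_ltn_trans lt_xz.
Qed.

Lemma ogt_cost_cut_loop_prefix w T P Q : P i = P (i + s) ->
  hit_outside_loop T P i s -> (forall m, m <= i + s -> P m = Q m) ->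
  ogt (cost w T Q) (cost w T P) ->
  ogt (cost w T (cut_loop i s Q)) (cost w T (cut_loop i s P)).
Proof.
move=> loopP outP PQ.
have loopQ : Q i = Q (i + s) by rewrite -!PQ ?leq_addr.
have outQ := hit_outside_loop_prefix PQ outP.
have QP m : m <= i + s -> Q m = P m by move/PQ.
have sameW k : k <= i + s -> prefix_weight w Q k = prefix_weight w P k.
  by move=> le_k; apply: eq_prefix_weight => m le_m; rewrite QP // (leq_trans le_m).
have le_i_is := leq_addr s i.
rewrite !cost_cut_loop // !costE.
case hitP: (hit_time T P) => [hp|] //.
case: (outP hp hitP) => [le_hp | lt_hp].
  have le_hp' := leq_trans le_hp le_i_is.
  by rewrite (hit_time_prefix PQ hitP le_hp') /= le_hp sameW ?ltnn.
case hitQ: (hit_time T Q) => [hq|] //=.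
case: (outQ hq hitQ) => [le_hq | lt_hq].
  have := hit_time_prefix QP hitQ (leq_trans le_hq le_i_is).
  by rewrite hitP => -[eq_hp]; move: lt_hp; rewrite eq_hp ltnNge (leq_trans le_hq).
rewrite [hp <= i]leqNgt (leq_ltn_trans le_i_is lt_hp).
rewrite [hq <= i]leqNgt (leq_ltn_trans le_i_is lt_hq) /=.
rewrite (sameW i) // (sameW (i + s)) // /ogt.
have := prefix_weight_mono w P (ltnW lt_hp); lia.
Qed.

Lemma is_play_cut_loop E P : P i = P (i + s) -> is_play E P -> is_play E (cut_loop i s P).
Proof.
move=> loop play n; case: (ltnP n i) => [lt_ni | le_in].
  by rewrite !cut_loop_le // ltnW.
by rewrite !cut_loop_ge // ?addSn ?play // ltnW.
Qed.

Lemma concat_play_cut_loop_small k P q : k <= i ->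
  concat_play k (cut_loop i s P) q = concat_play k P q.
Proof.
move=> le_ki; apply: functional_extensionality => n; rewrite /concat_play.
by case: ifP => // lt_nk; rewrite cut_loop_le // ltnW // (leq_trans lt_nk).
Qed.

Lemma concat_play_cut_loop_large k P q : i < k ->
  concat_play k (cut_loop i s P) q = cut_loop i s (concat_play (k + s) P q).
Proof.
move=> lt_ik; apply: functional_extensionality => n; rewrite /concat_play /cut_loop.
case: (leqP n i) => [le_ni | lt_in].
  have lt_nk := leq_ltn_trans le_ni lt_ik.
  by rewrite lt_nk (leq_trans lt_nk (leq_addr s k)).
by rewrite ltn_add2r subnDr.
Qed.

End CutLoop.
End FirstVisits.

Lemma exists_repeat (V : finType) (f : nat -> V) a n : #|V| < n ->
  exists i j, [/\ a <= i, i < j, j < a + n & f i = f j].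
Proof.
move=> lt_Vn; have : ~~ injectiveb (fun k : 'I_n => f (a + k)).
  by apply/injectiveP => /leq_card; rewrite card_ord leqNgt lt_Vn.
case/injectivePn => x [y neq_xy eq_f].
have lt_an (z : 'I_n) : a + z < a + n by rewrite ltn_add2l.
case: (ltngtP x y) => [lt_xy | lt_yx | /val_inj eq_xy]; last by rewrite eq_xy eqxx in neq_xy.
  by exists (a + x), (a + y); rewrite leq_addr ltn_add2l.
by exists (a + y), (a + x); rewrite leq_addr ltn_add2l.
Qed.

Lemma prefix_weight_le_maxW (V : finType) (E : rel V) (w0 w1 : V -> V -> nat) P k :
  is_play E P -> prefix_weight w1 P k <= k * maxW E w0 w1.
Proof.
move=> play; rewrite -[k in k * _]card_ord -sum_nat_const.
apply: leq_sum => j _; apply: leq_trans (leq_maxr (w0 _ _) _) _.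
exact: (leq_bigmax_cond (P j, P j.+1) (play j)).
Qed.

Section Witness.
Variables (V : finType) (E : rel V) (V0 : {set V}) (w0 w1 : V -> V -> nat).
Variables (T0 T1 : {set V}) (v0 : V) (c : nat).
Implicit Types (P : nat -> V).

Local Notation witness := (witness E V0 w0 w1 T0 T1 v0 c).

Lemma witness_cut_loop P i s : witness P -> P i = P (i + s) ->
  hit_outside_loop T0 P i s -> hit_outside_loop T1 P i s ->
  witness (cut_loop i s P).
Proof.
case=> P0 play cost0 dev loop out0 out1; split.
- by rewrite cut_loop_le.
- exact: is_play_cut_loop.
- exact: ole_cost_cut_loop.
move=> k v k_gt0 Ekv v_new; case: (leqP k i) => [le_ki | lt_ik].
  have le_k1i : k.-1 <= i by rewrite (leq_trans (leq_pred k)).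
  rewrite cut_loop_le // in Ekv; rewrite cut_loop_le // in v_new.
  have [sigma [valid win]] := dev k v k_gt0 Ekv v_new.
  exists sigma; split => // q cons; rewrite concat_play_cut_loop_small //.
  case: (win q cons) => [win0 | win1]; [by left | right].
  exact: ogt_cost_cut_loop loop out1 win1.
have le_ik1 : i <= k.-1 by rewrite -ltnS prednK.
rewrite cut_loop_ge // -subn1 addnBAC // subn1 in Ekv.
rewrite (cut_loop_ge loop (ltnW lt_ik)) in v_new.
have [sigma [valid win]] := dev (k + s) v (ltn_addr s k_gt0) Ekv v_new.
exists sigma; split => // q cons; rewrite concat_play_cut_loop_large //.
set Pq := concat_play (k + s) P q.
have PPq m : m <= i + s -> P m = Pq m.
  by move=> le_m; rewrite /Pq /concat_play (leq_ltn_trans le_m) // ltn_add2r.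
have loopPq : Pq i = Pq (i + s) by rewrite -!PPq ?leq_addr.
case: (win q cons) => [win0 | win1]; [left | right].
  exact: ole_cost_cut_loop loopPq (hit_outside_loop_prefix PPq out0) win0.
exact: ogt_cost_cut_loop_prefix loop out1 PPq win1.
Qed.

Lemma witness_hit_within P n : witness P -> hit_time T1 P = Some n ->
  exists P', witness P' /\ exists2 n', hit_time T1 P' = Some n' & n' <= 2 * #|V|.
Proof.
elim/ltn_ind: n P => n IH P wP hit1.
case: (leqP n (2 * #|V|)) => [le_n | lt_n]; first by exists P; split => //; exists n.
have [k0 hit0] : exists k0, hit_time T0 P = Some k0.
  by case: wP => _ _; rewrite costE; case: (hit_time T0 P) => // k0 _ _; exists k0.
have cut_step i j : i < j -> j < n -> P i = P j -> hit_outside_loop T0 P i (j - i) ->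
    exists P', witness P' /\ exists2 n', hit_time T1 P' = Some n' & n' <= 2 * #|V|.
  move=> lt_ij lt_jn eq_ij out0.
  have ij : i + (j - i) = j by rewrite subnKC // ltnW.
  have loop : P i = P (i + (j - i)) by rewrite ij.
  have out1 : hit_outside_loop T1 P i (j - i).
    by move=> h; rewrite hit1 => -[<-]; right; rewrite ij.
  apply: (IH (n - (j - i))) (witness_cut_loop wP loop out0 out1) _.
    by rewrite ltn_subrL subn_gt0 lt_ij (leq_ltn_trans _ lt_jn).
  by rewrite (hit_time_cut_loop loop out1) hit1 /= leqNgt (ltn_trans lt_ij lt_jn).
case: (ltnP #|V| (minn k0 n)) => [lt_V | le_V].
  have [i [j [_ lt_ij lt_j eq_ij]]] := exists_repeat P 0 lt_V.
  apply: (cut_step i j) => //; first by rewrite (leq_trans lt_j) // geq_minr.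
  move=> h; rewrite hit0 => -[<-]; right; rewrite subnKC ?(ltnW lt_ij) //.
  by rewrite (leq_trans lt_j) // geq_minl.
have lt_Vn : #|V| < n - k0 by lia.
have [i [j [le_k0i lt_ij lt_j eq_ij]]] := exists_repeat P k0 lt_Vn.
apply: (cut_step i j) => //; first by lia.
by move=> h; rewrite hit0 => -[<-]; left.
Qed.

End Witness.

Theorem lemma28 (V : finType) (E : rel V) (Esucc : forall v, exists v', E v v')
  (V0 : {set V}) (v0 : V) (w0 w1 : V -> V -> nat) (T0 T1 : {set V})
  (c : nat) (p : nat -> V) :
  witness E V0 w0 w1 T0 T1 v0 c p ->
  exists p', witness E V0 w0 w1 T0 T1 v0 c p' /\
    (cost w1 T1 p' = None \/ ole (cost w1 T1 p') (2 * #|V| * maxW E w0 w1)).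
Proof.
move=> wp; case hit1: (hit_time T1 p) => [n|]; last first.
  by exists p; split => //; left; rewrite costE hit1.
have [p' [wp' [n' hit1' le_n']]] := witness_hit_within wp hit1.
exists p'; split => //; right; rewrite costE hit1' /=.
case: wp' => _ play _ _.
apply: leq_trans (prefix_weight_le_maxW w0 w1 n' play) _.
by rewrite leq_mul2r le_n' orbT.
Qed.
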